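(* In the setting below, assume each $f_i$ is $L_i$-smooth, $B_f(x,y)\ge\frac{\mu_f}{2}\|x-y\|^2$ for all $x,y$ for some $\mu_f\ge0$, $\psi$ satisfies the $\mu_\psi$-condition, and $\eta_k\le\frac1{2n\sqrt{\bar LL^*}}$ for all $k\in[K]$. Then for any permutations and every $k\in[K]$, $$\|x_{k+1}-x_*\|^2\le\frac{\|x_*-x_1\|^2}{\prod_{s=1}^k\big(1+n\eta_s(\mu_f+2\mu_\psi)\big)}+\sum_{\ell=1}^k\frac{8n\eta_\ell^3R_\ell}{\prod_{s=\ell}^k\big(1+n\eta_s(\mu_f+2\mu_\psi)\big)},$$ where $R_\ell=\sum_{i=2}^n\frac{L_{\sigma_\ell^i}}{n}\Big\|\sum_{j=1}^{i-1}\nabla f_{\sigma_\ell^j}(x_* )\Big\|^2$.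
   Context: Setting. Let $n,d\in\mathbb N$, let $f_1,\dots,f_n:\mathbb R^d\to\mathbb R$ be convex, $f=\frac1n\sum_{i=1}^nf_i$, let $\psi:\mathbb R^d\to\mathbb R\cup\{+\infty\}$ be proper, closed and convex, and $F=f+\psi$. For a convex function $g$, $\nabla g(x)$ denotes an element of $\partial g(x)$, and $B_g(x,y)=g(x)-g(y)-\langle\nabla g(y),x-y\rangle$. The $\mu_\psi$-condition: $\mu_\psi\ge0$ and $B_\psi(x,y)\ge\frac{\mu_\psi}{2}\|x-y\|^2$ for all $x,y$ with $\partial\psi(y)\neq\emptyset$ and every choice of $\nabla\psi(y)\in\partial\psi(y)$. Assume there is $x_*\in\mathbb R^d$ with $F(x_* )=\inf_{x}F(x)\in\mathbb R$. Proximal shuffling gradient method: given $x_1\in\mathrm{dom}\,\psi$, a number of epochs $K\ge2$ and stepsizes $\eta_k>0$, for $k=1,\dots,K$: choose a permutation $\sigma_k=(\sigma_k^1,\dots,\sigma_k^n)$ of $[n]=\{1,\dots,n\}$; set $x_k^1=x_k$ and $x_k^{i+1}=x_k^i-\eta_k\nabla f_{\sigma_k^i}(x_k^i)$ for $i=1,\dots,n$; set $x_{k+1}=\arg\min_{x\in\mathbb R^d}\{n\psi(x)+\frac{1}{2\eta_k}\|x-x_k^{n+1}\|^2\}$. Smoothness: each $f_i$ is differentiable with $\|\nabla f_i(x)-\nabla f_i(y)\|\le L_i\|x-y\|$ for all $x,y$, $L_i>0$; $\bar L=\frac1n\sum_iL_i$, $L^*=\max_iL_i$. *)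

From HB Require Import structures.
From mathcomp Require Import all_boot all_order all_algebra all_fingroup.
From mathcomp Require Import all_classical all_reals all_analysis.
Set Implicit Arguments. Unset Strict Implicit. Unset Printing Implicit Defensive.
Import Order.TTheory GRing.Theory Num.Theory numFieldNormedType.Exports.
Local Open Scope ring_scope.

Section Defs.
Variables (R : realType) (d : nat).
Notation vec := 'rV[R]_d.

Definition dotp (u v : vec) : R := \sum_(i < d) u ord0 i * v ord0 i.
Definition enorm (u : vec) : R := Num.sqrt (dotp u u).
Definition sqnorm (u : vec) : R := enorm u ^+ 2.

Definition convex_fun (f : vec -> R) : Prop :=
  forall (x y : vec) (t : R), 0 <= t <= 1 ->
    f (t *: x + (1 - t) *: y) <= t * f x + (1 - t) * f y.

Definition is_gradient (f : vec -> R) (g : vec -> vec) : Prop :=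
  forall x : vec, differentiable f x /\ forall v : vec, 'd f x v = dotp (g x) v.

Definition lipschitz_grad (g : vec -> vec) (L : R) : Prop :=
  forall x y : vec, enorm (g x - g y) <= L * enorm (x - y).

Definition never_minfty (psi : vec -> \bar R) : Prop :=
  forall x, psi x != -oo%E.

Definition proper_fun (psi : vec -> \bar R) : Prop :=
  never_minfty psi /\ exists x, psi x \is a fin_num.

Definition closed_fun (psi : vec -> \bar R) : Prop :=
  closed [set p : vec * R | (psi p.1 <= p.2%:E)%E].

Definition convex_efun (psi : vec -> \bar R) : Prop :=
  forall (x y : vec) (t : R), 0 < t < 1 ->
    (psi (t *: x + (1 - t) *: y)%R <= t%:E * psi x + (1 - t)%:E * psi y)%E.

Definition subgrad (psi : vec -> \bar R) (y u : vec) : Prop :=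
  psi y \is a fin_num /\
  forall x : vec, (psi y + (dotp u (x - y))%:E <= psi x)%E.

(* mu_psi-condition: B_psi(x,y) >= mu/2 |x-y|^2 for all x, y with nonempty
   subdifferential at y and every subgradient at y *)
Definition mu_condition (psi : vec -> \bar R) (mu : R) : Prop :=
  0 <= mu /\
  forall (x y u : vec), subgrad psi y u ->
    (psi y + (dotp u (x - y) + mu / 2 * sqnorm (x - y))%:E <= psi x)%E.

(* inner loop of epoch: starting at x0, apply n incremental gradient steps
   following the permutation sigma; shuffle_pass ... i = x_k^{i+1} *)
Fixpoint shuffle_pass (n : nat) (g : 'I_n -> vec -> vec) (sigma : 'S_n)
    (eta : R) (x0 : vec) (i : nat) : vec :=
  match i with
  | 0 => x0
  | i'.+1 => let z := shuffle_pass g sigma eta x0 i' in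
             if insub i' is Some j then z - eta *: g (sigma j) z else z
  end.

Definition is_prox_point (n : nat) (psi : vec -> \bar R) (eta : R) (w z : vec)
    : Prop :=
  forall z' : vec,
    (n%:R%:E * psi z + (sqnorm (z - w) / (2 * eta))%:E
     <= n%:R%:E * psi z' + (sqnorm (z' - w) / (2 * eta))%:E)%E.

End Defs.

From HB Require Import structures.
From mathcomp Require Import all_boot all_order all_algebra all_fingroup.
From mathcomp Require Import all_classical all_reals all_analysis.
From mathcomp Require Import ring lra.
Import Order.TTheory GRing.Theory Num.Theory numFieldNormedType.Exports.

(* Within an epoch, optimality of the prox step gives x_k - x_{k+1} = eta sum_j a_j + n eta u,
   where a_j is the gradient of f_{sigma_j} at the inner iterate x_k^j and u is a subgradient of
   psi at x_{k+1}; optimality of xstar makes -grad f(xstar) a subgradient of psi at xstar.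
   Expanding |x_k - xstar|^2 around x_{k+1}, the three-point inequality for convex L-smooth
   functions bounds each <a_j, x_{k+1} - xstar> from below, and the strong-convexity terms of f
   and psi produce the factor 1 + n eta (mu_f + 2 mu_psi). The smoothness error
   sum_j L_{sigma_j} |x_{k+1} - x_k^j|^2 splits into |x_k - x_{k+1}|^2, the gradient differences
   |a_j - grad f_{sigma_j}(xstar)|^2 and the prefix sums of gradients at xstar; under the
   step-size bound the first two are absorbed by the term |x_k - x_{k+1}|^2 of the expansion and
   by the cocoercivity gain, leaving 8 n eta^3 R_k. Unrolling the one-epoch recursion gives the
   theorem. *)

Set Implicit Arguments.
Unset Strict Implicit.
Unset Printing Implicit Defensive.
Local Open Scope ring_scope.

Lemma le_of_forall_le_addt (R : realFieldType) (a b c : R) :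
  (forall t : R, 0 < t < 1 -> a <= b + t * c) -> a <= b.
Proof.
move=> h; apply/ler_addgt0Pr => e e0.
have [c_le0|c_gt0] := leP c 0.
  have := h 2^-1; rewrite invr_gt0 invf_lt1 ?ltr1n // ltr0n => /(_ isT).
  have : 2^-1 * c <= 0 by rewrite pmulr_rle0 // invr_gt0 ltr0n.
  lra.
have ec : 0 < e + c by rewrite addr_gt0.
have := h (e / (e + c)).
rewrite divr_gt0 //= ltr_pdivrMr // mul1r ltrDl c_gt0 => /(_ isT).
suff : e / (e + c) * c <= e by lra.
rewrite mulrAC ler_pdivrMr // ler_pM2l //; lra.
Qed.

Section InnerProduct.
Variables (R : realType) (d : nat).
Implicit Types (u v w : 'rV[R]_d) (a : R).

Lemma dotpC u v : dotp u v = dotp v u.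
Proof. by apply: eq_bigr => i _; rewrite mulrC. Qed.

Lemma dotpDl u v w : dotp (u + v) w = dotp u w + dotp v w.
Proof. by rewrite /dotp -big_split; apply: eq_bigr => i _; rewrite !mxE mulrDl. Qed.

Lemma dotpDr u v w : dotp w (u + v) = dotp w u + dotp w v.
Proof. by rewrite dotpC dotpDl !(dotpC w). Qed.

Lemma dotpZl a u v : dotp (a *: u) v = a * dotp u v.
Proof. by rewrite /dotp mulr_sumr; apply: eq_bigr => i _; rewrite !mxE mulrA. Qed.

Lemma dotpZr a u v : dotp u (a *: v) = a * dotp u v.
Proof. by rewrite dotpC dotpZl dotpC. Qed.

Lemma dotpNl u v : dotp (- u) v = - dotp u v.
Proof. by rewrite -scaleN1r dotpZl mulN1r. Qed.

Lemma dotpNr u v : dotp u (- v) = - dotp u v.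
Proof. by rewrite dotpC dotpNl dotpC. Qed.

Lemma dotpBl u v w : dotp (u - v) w = dotp u w - dotp v w.
Proof. by rewrite dotpDl dotpNl. Qed.

Lemma dotpBr u v w : dotp w (u - v) = dotp w u - dotp w v.
Proof. by rewrite dotpDr dotpNr. Qed.

Lemma dotp0l v : dotp 0 v = 0.
Proof. by rewrite -(scale0r (0 : 'rV[R]_d)) dotpZl mul0r. Qed.

Lemma dotp0r v : dotp v 0 = 0.
Proof. by rewrite dotpC dotp0l. Qed.

Lemma dotp_suml (I : Type) (r : seq I) (P : pred I) (F : I -> 'rV[R]_d) v :
  dotp (\sum_(i <- r | P i) F i) v = \sum_(i <- r | P i) dotp (F i) v.
Proof.
by elim/big_rec2: _ => [|i y1 y2 _ <-]; rewrite ?dotp0l ?dotpDl.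
Qed.

Lemma dotpp_ge0 u : 0 <= dotp u u.
Proof. by apply: sumr_ge0 => i _; rewrite -expr2 sqr_ge0. Qed.

Lemma sqnormE u : sqnorm u = dotp u u.
Proof. by rewrite /sqnorm /enorm sqr_sqrtr // dotpp_ge0. Qed.

Lemma sqnorm_ge0 u : 0 <= sqnorm u.
Proof. by rewrite sqnormE dotpp_ge0. Qed.

Lemma enorm_ge0 u : 0 <= enorm u.
Proof. exact: sqrtr_ge0. Qed.

Lemma sqnorm0 : sqnorm (0 : 'rV[R]_d) = 0.
Proof. by rewrite sqnormE dotp0r. Qed.

Lemma sqnormD u v : sqnorm (u + v) = sqnorm u + 2 * dotp u v + sqnorm v.
Proof. by rewrite !sqnormE !dotpDl !dotpDr (dotpC v u); ring. Qed.

Lemma sqnormN u : sqnorm (- u) = sqnorm u.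
Proof. by rewrite !sqnormE dotpNl dotpNr opprK. Qed.

Lemma sqnormZ a u : sqnorm (a *: u) = a ^+ 2 * sqnorm u.
Proof. by rewrite !sqnormE dotpZl dotpZr mulrA expr2. Qed.

Lemma sqnormBC u v : sqnorm (u - v) = sqnorm (v - u).
Proof. by rewrite -sqnormN opprB. Qed.

Lemma enormZ a u : enorm (a *: u) = `|a| * enorm u.
Proof. by rewrite /enorm dotpZl dotpZr mulrA -expr2 sqrtrM ?sqr_ge0 // sqrtr_sqr. Qed.

Lemma enormN u : enorm (- u) = enorm u.
Proof. by rewrite -scaleN1r enormZ normrN normr1 mul1r. Qed.

Lemma dotp_le_amgm u v (m : R) :
  0 < m -> 2 * dotp u v <= m * sqnorm u + sqnorm v / m.
Proof.
move=> m_gt0.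
have : 0 <= m * sqnorm (u - m^-1 *: v) by rewrite mulr_ge0 ?sqnorm_ge0 ?ltW.
rewrite sqnormD sqnormN dotpNr dotpZr sqnormZ.
have -> : m * (sqnorm u + 2 * - (m^-1 * dotp u v) + m^-1 ^+ 2 * sqnorm v)
        = m * sqnorm u - 2 * dotp u v + sqnorm v / m by field; rewrite gt_eqF.
lra.
Qed.

Lemma sqnormD_le u v : sqnorm (u + v) <= 2 * sqnorm u + 2 * sqnorm v.
Proof. by have := @dotp_le_amgm u v 1 ltr01; rewrite sqnormD divr1; lra. Qed.

Lemma dotp_le_enorm u v : dotp u v <= enorm u * enorm v.
Proof.
have nu0 := enorm_ge0 u; have nv0 := enorm_ge0 v.
apply: (@le_of_forall_le_addt _ _ _ (enorm u + enorm v + 1)) => e /andP[e0 e1].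
set a := enorm u + e; set b := enorm v + e.
have a0 : 0 < a by rewrite ltr_wpDl.
have b0 : 0 < b by rewrite ltr_wpDl.
have ua : sqnorm u <= a ^+ 2 by rewrite /sqnorm /a; nra.
have vb : sqnorm v <= b ^+ 2 by rewrite /sqnorm /b; nra.
have ab : b / a * sqnorm u + sqnorm v / (b / a) <= 2 * (a * b).
  have -> : 2 * (a * b) = b / a * a ^+ 2 + b ^+ 2 / (b / a) by field; rewrite !gt_eqF.
  apply: lerD; first by apply: ler_wpM2l => //; rewrite divr_ge0 ?ltW.
  by apply: ler_wpM2r => //; rewrite invr_ge0 divr_ge0 ?ltW.
have := dotp_le_amgm u v (divr_gt0 b0 a0).
rewrite /a /b in ab *; nra.
Qed.

Lemma sqnorm_sum_le (I : Type) (s : seq I) (P : pred I) (c : I -> 'rV[R]_d) :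
  sqnorm (\sum_(i <- s | P i) c i) <= (size s)%:R * \sum_(i <- s | P i) sqnorm (c i).
Proof.
elim: s => [|i s IH]; first by rewrite !big_nil sqnorm0 mul0r.
rewrite !big_cons /= -natr1.
have S0 : 0 <= \sum_(j <- s | P j) sqnorm (c j) by apply: sumr_ge0 => *; exact: sqnorm_ge0.
case: (P i); last by lra.
set S := \sum_(j <- s | P j) c j in IH *; set Q := \sum_(j <- s | P j) _ in IH S0 *.
have ci0 := sqnorm_ge0 (c i).
rewrite sqnormD.
have [s0|s_gt0] := posnP (size s).
  by rewrite /S /Q (size0nil s0) !big_nil dotp0r sqnorm0 /=; lra.
set m := (size s)%:R in IH *; have m0 : 0 < m by rewrite ltr0n.
have := dotp_le_amgm (c i) S m0.
have : sqnorm S / m <= Q by rewrite ler_pdivrMr // mulrC.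
nra.
Qed.

End InnerProduct.

Section SmoothConvex.
Variables (R : realType) (d : nat).
Implicit Types (f : 'rV[R]_d -> R) (g : 'rV[R]_d -> 'rV[R]_d) (x y v : 'rV[R]_d).

Lemma is_derive_line f g x v (t : R) :
  is_gradient f g ->
  is_derive t 1 (fun s : R => f (s *: v + x)) (dotp (g (t *: v + x)) v).
Proof.
move=> fg; have [fx dfx] := fg (t *: v + x).
have shiftE :
    (fun h : R => h^-1 *: (((fun s => f (s *: v + x)) \o shift t) (h *: 1) - f (t *: v + x)))
  = (fun h : R => h^-1 *: ((f \o shift (t *: v + x)) (h *: v) - f (t *: v + x))).
  apply/funext => s /=; congr (_ *: (f _ - _)).
  by rewrite /shift /= [s *: 1]mulr1 scalerDl addrA.
apply: DeriveDef; first by rewrite /derivable shiftE; exact: diff_derivable.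
by rewrite /derive shiftE -dfx -deriveE.
Qed.

(* The quadratic correction [k s^2] lets the caller cancel the Lipschitz error term. *)
Lemma mvt_segment f g x y (k : R) :
  is_gradient f g ->
  exists2 c : R, 0 < c < 1 &
    f y - f x - dotp (g x) (y - x) - k
    = dotp (g (c *: (y - x) + x) - g x) (y - x) - 2 * k * c.
Proof.
move=> fg; set v := y - x; set c0 := dotp (g x) v.
pose p s := f (s *: v + x) - c0 * s - k * s ^+ 2.
pose p' s := dotp (g (s *: v + x)) v - c0 - 2 * k * s.
have dp (t : R) : is_derive t 1 p (p' t).
  have dsum := is_deriveB (is_deriveB (is_derive_line x v t fg)
                        (is_deriveZ c0 (is_derive_id t 1)))
                     (is_deriveZ k (is_deriveX 2 (is_derive_id t 1))).
  have -> : p = (fun s => f (s *: v + x)) - c0 \*: id - k \*: id ^+ 2.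
    by apply/funext => s; rewrite /p /= /GRing.scale /= expr2.
  by apply: is_derive_eq dsum _; rewrite /p' /GRing.scale /= expr1 !mulr1; ring.
have pcont := @derivable_within_continuous R R p `[0, 1]%R
  (fun t _ => @ex_derive _ _ _ _ _ _ _ (dp t)).
have [c c01 pc] := MVT ltr01 (fun t _ => dp t) pcont.
exists c; first by move: c01; rewrite in_itv.
move: pc; rewrite /p /p' !scale0r !add0r scale1r subr0 mulr0 subr0.
rewrite mulr1 expr1n mulr1 /v subrK expr2 !mulr0 subr0 => pc.
have -> : f y - f x - c0 - k = f y - c0 - k - f x by ring.
by rewrite pc mulr1 dotpBl /c0; ring.
Qed.

Lemma smooth_le_linear f g (L : R) x y :
  is_gradient f g -> lipschitz_grad g L ->
  f y <= f x + dotp (g x) (y - x) + L / 2 * sqnorm (y - x).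
Proof.
move=> fg gL.
have [c /andP[c0 c1] mvt] := mvt_segment x y (L / 2 * sqnorm (y - x)) fg.
have cs := dotp_le_enorm (g (c *: (y - x) + x) - g x) (y - x).
have lip := gL (c *: (y - x) + x) x.
rewrite addrK enormZ gtr0_norm // in lip.
have : dotp (g (c *: (y - x) + x) - g x) (y - x) <= L * c * sqnorm (y - x).
  apply: (le_trans cs); rewrite /sqnorm expr2 mulrA.
  by apply: ler_wpM2r; rewrite ?enorm_ge0 -?mulrA.
lra.
Qed.

Lemma smooth_ge_linear f g (L : R) x y :
  is_gradient f g -> lipschitz_grad g L ->
  f x + dotp (g x) (y - x) - L / 2 * sqnorm (y - x) <= f y.
Proof.
move=> fg gL.
have [c /andP[c0 c1] mvt] := mvt_segment x y (- (L / 2 * sqnorm (y - x))) fg.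
have cs := dotp_le_enorm (- (g (c *: (y - x) + x) - g x)) (y - x).
rewrite enormN dotpNl in cs.
have lip := gL (c *: (y - x) + x) x.
rewrite addrK enormZ gtr0_norm // in lip.
have : - dotp (g (c *: (y - x) + x) - g x) (y - x) <= L * c * sqnorm (y - x).
  apply: (le_trans cs); rewrite /sqnorm expr2 mulrA.
  by apply: ler_wpM2r; rewrite ?enorm_ge0 -?mulrA.
lra.
Qed.

Lemma convex_grad_le f g (L : R) x y :
  convex_fun f -> is_gradient f g -> lipschitz_grad g L ->
  f x + dotp (g x) (y - x) <= f y.
Proof.
move=> fconv fg gL.
apply: (@le_of_forall_le_addt _ _ _ (L / 2 * sqnorm (y - x))) => t /andP[t0 t1].
have := fconv y x t; rewrite (ltW t0) (ltW t1) => /(_ isT).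
have -> : t *: y + (1 - t) *: x = x + t *: (y - x).
  by rewrite scalerBl scale1r scalerBr addrCA.
have := smooth_ge_linear x (x + t *: (y - x)) fg gL.
rewrite [x + _]addrC addrK dotpZr sqnormZ => lower upper.
have : t * (f x + dotp (g x) (y - x)) <= t * (f y + t * (L / 2 * sqnorm (y - x))).
  nra.
by rewrite ler_pM2l.
Qed.

Lemma convex_smooth_cocoercive f g (L : R) x y :
  convex_fun f -> is_gradient f g -> lipschitz_grad g L -> 0 < L ->
  f x + dotp (g x) (y - x) + sqnorm (g y - g x) / (2 * L) <= f y.
Proof.
move=> fconv fg gL L0.
set D := g y - g x; set z := y - L^-1 *: D.
have h1 := convex_grad_le x z fconv fg gL.
have h2 := smooth_le_linear y z fg gL.
have zx : z - x = (y - x) - L^-1 *: D by rewrite /z addrAC.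
have zy : z - y = - (L^-1 *: D) by rewrite /z addrAC subrr add0r.
rewrite zx dotpBr dotpZr in h1; rewrite zy dotpNr dotpZr sqnormN sqnormZ in h2.
have DD : sqnorm D = dotp (g y) D - dotp (g x) D by rewrite sqnormE {1}/D dotpBl.
have -> : sqnorm D / (2 * L) = L^-1 * sqnorm D / 2 by field; rewrite gt_eqF.
have LD : L / 2 * (L^-1 ^+ 2 * sqnorm D) = L^-1 * sqnorm D / 2.
  by field; rewrite gt_eqF.
rewrite LD in h2.
move: h1 h2; rewrite DD mulrBr; lra.
Qed.

Lemma smooth_convex_three_point f g (L : R) x y z :
  convex_fun f -> is_gradient f g -> lipschitz_grad g L -> 0 < L ->
  f y - f z - L / 2 * sqnorm (y - x) + sqnorm (g z - g x) / (2 * L)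
    <= dotp (g x) (y - z).
Proof.
move=> fconv fg gL L0.
have := smooth_le_linear x y fg gL; have := convex_smooth_cocoercive x z fconv fg gL L0.
have -> : y - z = (y - x) - (z - x) by rewrite opprB addrA subrK.
by rewrite (dotpBr (y - x) (z - x)); lra.
Qed.

End SmoothConvex.

Section Subgradients.
Variables (R : realType) (d : nat).
Implicit Types (psi : 'rV[R]_d -> \bar R) (x y z u : 'rV[R]_d).

Lemma subgrad_of_segment_bound psi y u (C : 'rV[R]_d -> R) :
  convex_efun psi -> never_minfty psi -> psi y \is a fin_num ->
  (forall z t, 0 < t < 1 ->
     ((fine (psi y) + t * dotp u (z - y) - t ^+ 2 * C z)%:E
        <= psi (t *: z + (1 - t) *: y)%R)%E) ->
  subgrad psi y u.
Proof.
move=> psi_conv psi_ninfty psiy seg; split => // z.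
rewrite -(fineK psiy) -EFinD.
case psiz: (psi z) => [r| |]; last 2 first.
- exact: leey.
- by have := psi_ninfty z; rewrite psiz.
rewrite lee_fin.
apply: (@le_of_forall_le_addt _ _ _ (C z)) => t /andP[t0 t1].
have := le_trans (seg z t (andb_true_intro (conj t0 t1)))
                 (psi_conv z y t (andb_true_intro (conj t0 t1))).
rewrite psiz -(fineK psiy) -!EFinM -EFinD lee_fin /=.
set p := fine (psi y) => h.
have : t * (p + dotp u (z - y)) <= t * (r + t * C z).
  by rewrite expr2 in h; rewrite !mulrDr mulrA; lra.
by rewrite ler_pM2l.
Qed.

Lemma prox_point_subgrad (n : nat) psi (eta : R) (w x : 'rV[R]_d) :
  (0 < n)%N -> 0 < eta -> proper_fun psi -> convex_efun psi ->
  is_prox_point n psi eta w x -> subgrad psi x ((n%:R * eta)^-1 *: (w - x)).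
Proof.
move=> n0 eta0 [psi_ninfty [z0 psiz0]] psi_conv prox.
have n_gt0 : 0 < n%:R :> R by rewrite ltr0n.
have psix : psi x \is a fin_num.
  have := prox z0; rewrite -(fineK psiz0) -EFinM -EFinD.
  case E: (psi x) => [r| |] //; first by rewrite mulry gtr0_sg // mul1e addye.
  by have := psi_ninfty x; rewrite E.
apply: (@subgrad_of_segment_bound _ _ _ (fun z => sqnorm (z - x) / (2 * n%:R * eta)))
  => // z t /andP[t0 t1].
set zt := t *: z + (1 - t) *: x.
have := prox zt; rewrite -(fineK psix) -EFinM -EFinD.
case E: (psi zt) => [q| |]; last 2 first.
- by move=> _; exact: leey.
- by have := psi_ninfty zt; rewrite E.
rewrite -EFinM -EFinD !lee_fin /=.
have -> : zt - w = (x - w) + t *: (z - x).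
  by rewrite /zt scalerBl scale1r scalerBr addrCA addrAC.
rewrite (sqnormD (x - w)) dotpZr sqnormZ dotpZl -[w - x]opprB dotpNl.
set p := fine (psi x); set X := dotp (x - w) (z - x).
set S := sqnorm (z - x); set A := sqnorm (x - w) => h.
rewrite -(ler_pM2l n_gt0).
have -> : n%:R * (p + t * ((n%:R * eta)^-1 * - X) - t ^+ 2 * (S / (2 * n%:R * eta)))
        = n%:R * p - (2 * t * X + t ^+ 2 * S) / (2 * eta) by field; rewrite !gt_eqF.
have split_quad : (A + 2 * (t * X) + t ^+ 2 * S) / (2 * eta)
                 = A / (2 * eta) + (2 * t * X + t ^+ 2 * S) / (2 * eta).
  by field; rewrite gt_eqF.
rewrite split_quad in h; lra.
Qed.

Lemma minimizer_subgrad psi (h : 'rV[R]_d -> R) (G : 'rV[R]_d) (C : R) x :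
  never_minfty psi -> convex_efun psi -> psi x \is a fin_num ->
  (forall y, h y <= h x + dotp G (y - x) + C * sqnorm (y - x)) ->
  (forall y, ((h x)%:E + psi x <= (h y)%:E + psi y)%E) ->
  subgrad psi x (- G).
Proof.
move=> psi_ninfty psi_conv psix h_upper xmin.
apply: (@subgrad_of_segment_bound _ _ _ (fun z => C * sqnorm (z - x)))
  => // z t /andP[t0 t1].
set zt := t *: z + (1 - t) *: x.
have := xmin zt; rewrite -(fineK psix) -EFinD.
case E: (psi zt) => [q| |]; last 2 first.
- by move=> _; exact: leey.
- by have := psi_ninfty zt; rewrite E.
have := h_upper zt.
have -> : zt - x = t *: (z - x).
  by rewrite /zt scalerBl scale1r scalerBr addrCA addrAC subrr add0r.
rewrite dotpZr sqnormZ dotpNl -EFinD !lee_fin /=; lra.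
Qed.

Lemma mu_condition_gap psi (mu mu_h : R) (h : 'rV[R]_d -> R) (G y z u : 'rV[R]_d) :
  mu_condition psi mu -> subgrad psi y u -> subgrad psi z (- G) ->
  mu_h / 2 * sqnorm (y - z) <= h y - h z - dotp G (y - z) ->
  (mu_h / 2 + mu) * sqnorm (y - z) <= dotp u (y - z) + h y - h z.
Proof.
move=> [_ mu_psi] suby subz h_gap.
have := mu_psi z y u suby; have := mu_psi y z _ subz.
rewrite -(fineK suby.1) -(fineK subz.1) -!EFinD !lee_fin.
rewrite dotpNl -[z - y]opprB dotpNr sqnormN; lra.
Qed.

End Subgradients.

Section Shuffling.
Variables (R : realType) (d n : nat).
Implicit Types (g : 'I_n -> 'rV[R]_d -> 'rV[R]_d) (L : 'I_n -> R) (sig : 'S_n).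

Lemma shuffle_passE g sig (eta : R) x0 (i : nat) : (i <= n)%N ->
  shuffle_pass g sig eta x0 i =
    x0 - eta *: \sum_(j < n | (j < i)%N) g (sig j) (shuffle_pass g sig eta x0 j).
Proof.
elim: i => [_|i IH i_lt_n]; first by rewrite big_pred0 // scaler0 subr0.
rewrite /= insubT /= [in RHS](bigD1 (Sub i i_lt_n)) //=.
have -> : \sum_(j < n | (j < i.+1)%N && (j != Sub i i_lt_n))
            g (sig j) (shuffle_pass g sig eta x0 j)
        = \sum_(j < n | (j < i)%N) g (sig j) (shuffle_pass g sig eta x0 j).
  by apply: eq_bigl => j; rewrite ltnS leq_eqVlt -val_eqE /=; case: ltngtP.
by rewrite {1}(IH (ltnW i_lt_n)) scalerDr opprD addrAC addrA.
Qed.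

Lemma sqnorm_prefix_sum_le (a b : 'I_n -> 'rV[R]_d) (j : nat) :
  sqnorm (\sum_(l < n | (l < j)%N) a l)
    <= 2 * sqnorm (\sum_(l < n | (l < j)%N) b l)
       + 2 * n%:R * \sum_(l < n) sqnorm (a l - b l).
Proof.
have -> : \sum_(l < n | (l < j)%N) a l
        = \sum_(l < n | (l < j)%N) b l + \sum_(l < n | (l < j)%N) (a l - b l).
  by rewrite sumrB addrC subrK.
apply: (le_trans (sqnormD_le _ _)); rewrite lerD2l -mulrA ler_wpM2l //.
have := sqnorm_sum_le (index_enum 'I_n) (fun l : 'I_n => (l < j)%N) (fun l => a l - b l).
rewrite /index_enum -enumT size_enum_ord => /le_trans; apply.
rewrite ler_wpM2l // [X in _ <= X](bigID (fun l : 'I_n => (l < j)%N)) /= lerDl.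
by apply: sumr_ge0 => l _; exact: sqnorm_ge0.
Qed.

Definition shuffling_variance g L sig (x : 'rV[R]_d) : R :=
  \sum_(i < n | (0 < i)%N)
    (L (sig i) / n%:R * sqnorm (\sum_(j < n | (j < i)%N) g (sig j) x)).

Lemma shuffling_varianceE g L sig x : (0 < n)%N ->
  n%:R * shuffling_variance g L sig x
    = \sum_(i < n) L (sig i) * sqnorm (\sum_(j < n | (j < i)%N) g (sig j) x).
Proof.
move=> n_gt0; rewrite /shuffling_variance big_mkcond mulr_sumr /=.
apply: eq_bigr => i _; case: (posnP i) => [i0|i_gt0].
  by rewrite mulr0 big_pred0 ?sqnorm0 ?mulr0 // => l; rewrite i0.
by field; rewrite pnatr_eq0 -lt0n.
Qed.

Lemma shuffling_variance_ge0 g L sig x :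
  (forall i, 0 <= L i) -> 0 <= shuffling_variance g L sig x.
Proof.
move=> L_ge0; apply: sumr_ge0 => i _.
by rewrite mulr_ge0 ?divr_ge0 ?sqnorm_ge0.
Qed.

Lemma mean_smooth_le_linear (f : 'I_n -> 'rV[R]_d -> R) g L x y :
  (forall i, is_gradient (f i) (g i)) -> (forall i, lipschitz_grad (g i) (L i)) ->
  n%:R^-1 * \sum_(i < n) f i y
    <= n%:R^-1 * \sum_(i < n) f i x + dotp (n%:R^-1 *: \sum_(i < n) g i x) (y - x)
       + (n%:R^-1 * \sum_(i < n) L i) / 2 * sqnorm (y - x).
Proof.
move=> fg gL.
have : \sum_(i < n) f i y
    <= \sum_(i < n) (f i x + dotp (g i x) (y - x) + L i / 2 * sqnorm (y - x)).
  by apply: ler_sum => i _; exact: smooth_le_linear.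
have n_inv0 : 0 <= n%:R^-1 :> R by rewrite invr_ge0 ler0n.
rewrite !big_split /= dotpZl dotp_suml -!mulr_suml => /(ler_wpM2l n_inv0).
by rewrite !mulrDr; lra.
Qed.

Lemma stepsize_bounds L (eta : R) :
  (0 < n)%N -> (forall i, 0 < L i) -> 0 < eta ->
  eta <= (2 * n%:R * Num.sqrt ((n%:R^-1 * \sum_(i < n) L i)
                                * \big[Num.max/0]_(i < n) L i))^-1 ->
  (forall i, 4 * eta ^+ 2 * n%:R * (\sum_(j < n) L j) * L i <= 1)
  /\ 2 * eta * (\sum_(j < n) L j) <= 1.
Proof.
move=> n_gt0 L_gt0 eta0 eta_le.
set Ls := \sum_(j < n) L j; set M := \big[Num.max/0]_(j < n) L j.
have N0 : 0 < n%:R :> R by rewrite ltr0n.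
have LM i : L i <= M by apply: (le_bigmax (T := R)).
have Ls_gt0 : 0 < Ls.
  rewrite /Ls (bigD1 (Ordinal n_gt0)) //= ltr_pwDl //.
  by apply: sumr_ge0 => i _; exact: ltW.
have M_gt0 : 0 < M := lt_le_trans (L_gt0 (Ordinal n_gt0)) (LM _).
have LsM : Ls <= n%:R * M.
  rewrite -[n in n%:R]card_ord mulr_natl -sumr_const.
  by apply: ler_sum => i _; exact: LM.
have s_ge0 : 0 <= n%:R^-1 * Ls * M by rewrite !mulr_ge0 ?invr_ge0 ?ltW.
have s_gt0 : 0 < Num.sqrt (n%:R^-1 * Ls * M) by rewrite sqrtr_gt0 !mulr_gt0 ?invr_gt0.
have key : 4 * eta ^+ 2 * n%:R * Ls * M <= 1.
  have : eta * (2 * n%:R * Num.sqrt (n%:R^-1 * Ls * M)) <= 1.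
    by rewrite -ler_pdivlMr ?mulr_gt0 // div1r.
  have -> : 4 * eta ^+ 2 * n%:R * Ls * M
          = (eta * (2 * n%:R * Num.sqrt (n%:R^-1 * Ls * M))) ^+ 2.
    by rewrite !exprMn sqr_sqrtr //; field; rewrite gt_eqF.
  move=> h; rewrite expr_le1 // !mulr_ge0 ?ltW //.
split=> [i|]; first by apply: le_trans key; rewrite ler_wpM2l ?LM // !mulr_ge0 ?ltW.
have : (2 * eta * Ls) ^+ 2 <= 1.
  apply: le_trans key.
  have -> : (2 * eta * Ls) ^+ 2 = 4 * eta ^+ 2 * Ls * Ls by ring.
  have -> : 4 * eta ^+ 2 * n%:R * Ls * M = 4 * eta ^+ 2 * Ls * (n%:R * M) by ring.
  by rewrite ler_wpM2l // !mulr_ge0 ?ltW.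
by rewrite expr_le1 // !mulr_ge0 ?ltW.
Qed.

End Shuffling.

Section Epoch.
Variables (R : realType) (d n : nat).
Hypothesis n_gt0 : (0 < n)%N.
Variables (f : 'I_n -> 'rV[R]_d -> R) (g : 'I_n -> 'rV[R]_d -> 'rV[R]_d) (L : 'I_n -> R).
Hypotheses (f_conv : forall i, convex_fun (f i)) (fg : forall i, is_gradient (f i) (g i)).
Hypotheses (L_gt0 : forall i, 0 < L i) (gL : forall i, lipschitz_grad (g i) (L i)).
Variables (sig : 'S_n) (eta : R) (x x' xstar : 'rV[R]_d).
Hypothesis eta_gt0 : 0 < eta.

Let X (j : 'I_n) := shuffle_pass g sig eta x j.
Let a (j : 'I_n) := g (sig j) (X j).
Let b (j : 'I_n) := g (sig j) xstar.

Lemma sum_perm (F : 'I_n -> R) : \sum_(j < n) F (sig j) = \sum_(i < n) F i.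
Proof. by rewrite [RHS](reindex_inj (@perm_inj _ sig)). Qed.

Lemma sum_grad_three_point :
  \sum_(i < n) f i x' - \sum_(i < n) f i xstar
  - (\sum_(j < n) L (sig j) * sqnorm (x' - X j)) / 2
  + (\sum_(j < n) sqnorm (b j - a j) / L (sig j)) / 2
    <= \sum_(j < n) dotp (a j) (x' - xstar).
Proof.
rewrite -(sum_perm (f^~ x')) -(sum_perm (f^~ xstar)) !mulr_suml -!sumrB -big_split.
apply: ler_sum => j _ /=.
have := smooth_convex_three_point (X j) x' xstar (f_conv (sig j)) (fg (sig j))
          (gL (sig j)) (L_gt0 (sig j)).
have -> : sqnorm (b j - a j) / (2 * L (sig j)) = sqnorm (b j - a j) / L (sig j) / 2.
  by field; rewrite gt_eqF.
by rewrite -/(a j) -/(b j); lra.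
Qed.

Lemma iterate_dist_le (j : 'I_n) :
  sqnorm (x' - X j)
    <= 2 * sqnorm (x - x') + 4 * eta ^+ 2 * sqnorm (\sum_(l < n | (l < j)%N) b l)
       + 4 * eta ^+ 2 * n%:R * \sum_(l < n) sqnorm (a l - b l).
Proof.
have -> : x' - X j = eta *: \sum_(l < n | (l < j)%N) a l + - (x - x').
  rewrite /X shuffle_passE 1?ltnW //.
  by apply/matrixP => i k; rewrite !mxE; ring.
apply: (le_trans (sqnormD_le _ _)); rewrite sqnormN sqnormZ.
have := sqnorm_prefix_sum_le a b j.
have := sqr_ge0 eta; nra.
Qed.

Lemma smoothness_error_le :
  eta <= (2 * n%:R * Num.sqrt ((n%:R^-1 * \sum_(i < n) L i)
                                * \big[Num.max/0]_(i < n) L i))^-1 ->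
  eta * \sum_(j < n) L (sig j) * sqnorm (x' - X j)
    <= sqnorm (x - x') + 4 * n%:R * eta ^+ 3 * shuffling_variance g L sig xstar
       + eta * \sum_(j < n) sqnorm (b j - a j) / L (sig j).
Proof.
move=> eta_le.
have [eta_L eta_Ls] := stepsize_bounds n_gt0 L_gt0 eta_gt0 eta_le.
set Ls := \sum_(i < n) L i in eta_L eta_Ls *.
set C := \sum_(l < n) sqnorm (a l - b l).
have Q_le : \sum_(j < n) L (sig j) * sqnorm (x' - X j)
    <= (2 * sqnorm (x - x') + 4 * eta ^+ 2 * n%:R * C) * Ls
       + 4 * eta ^+ 2 * (n%:R * shuffling_variance g L sig xstar).
  apply: (@le_trans _ _ (\sum_(j < n) ((2 * sqnorm (x - x') + 4 * eta ^+ 2 * n%:R * C) * L (sig j)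
            + 4 * eta ^+ 2 * (L (sig j) * sqnorm (\sum_(l < n | (l < j)%N) b l))))).
    apply: ler_sum => j _; have := iterate_dist_le j; rewrite -/C.
    have := L_gt0 (sig j); nra.
  by rewrite big_split /= -!mulr_sumr (sum_perm L) shuffling_varianceE.
have C_le : 4 * eta ^+ 3 * n%:R * Ls * C
            <= eta * \sum_(j < n) sqnorm (b j - a j) / L (sig j).
  rewrite /C [Ls]lock !mulr_sumr -lock; apply: ler_sum => l _.
  have Ll := L_gt0 (sig l).
  have q0 : 0 <= eta * (sqnorm (a l - b l) / L (sig l)).
    by rewrite mulr_ge0 ?divr_ge0 ?sqnorm_ge0 ?ltW.
  have -> : 4 * eta ^+ 3 * n%:R * Ls * sqnorm (a l - b l)
          = 4 * eta ^+ 2 * n%:R * Ls * L (sig l) * (eta * (sqnorm (a l - b l) / L (sig l))).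
    by field; rewrite gt_eqF.
  by rewrite (sqnormBC (b l)) -[X in _ <= X]mul1r ler_wpM2r.
have D_le : 2 * eta * Ls * sqnorm (x - x') <= sqnorm (x - x').
  by rewrite -[X in _ <= X]mul1r ler_wpM2r ?sqnorm_ge0.
have := ler_wpM2l (ltW eta_gt0) Q_le.
have := shuffling_variance_ge0 g sig xstar (fun i => ltW (L_gt0 i)).
lra.
Qed.

Lemma epoch_contraction (psi : 'rV[R]_d -> \bar R) (mu_f mu_psi : R) :
  proper_fun psi -> convex_efun psi -> mu_condition psi mu_psi ->
  mu_f / 2 * sqnorm (x' - xstar)
    <= n%:R^-1 * \sum_(i < n) f i x' - n%:R^-1 * \sum_(i < n) f i xstar
       - dotp (n%:R^-1 *: \sum_(i < n) g i xstar) (x' - xstar) ->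
  psi xstar \is a fin_num ->
  (forall y, ((n%:R^-1 * \sum_(i < n) f i xstar)%:E + psi xstar
               <= (n%:R^-1 * \sum_(i < n) f i y)%:E + psi y)%E) ->
  eta <= (2 * n%:R * Num.sqrt ((n%:R^-1 * \sum_(i < n) L i)
                                * \big[Num.max/0]_(i < n) L i))^-1 ->
  is_prox_point n psi eta (shuffle_pass g sig eta x n) x' ->
  (1 + n%:R * eta * (mu_f + 2 * mu_psi)) * sqnorm (x' - xstar)
    <= sqnorm (x - xstar) + 8 * n%:R * eta ^+ 3 * shuffling_variance g L sig xstar.
Proof.
move=> psi_proper psi_conv psi_mu f_gap psi_xstar xstar_min eta_le prox.
have n0 : 0 < n%:R :> R by rewrite ltr0n.
set u := (n%:R * eta)^-1 *: (shuffle_pass g sig eta x n - x').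
have sub_x' : subgrad psi x' u := prox_point_subgrad n_gt0 eta_gt0 psi_proper psi_conv prox.
pose fbar y := n%:R^-1 * \sum_(i < n) f i y.
have sub_xstar := minimizer_subgrad (h := fbar) psi_proper.1 psi_conv psi_xstar
  (fun y => mean_smooth_le_linear xstar y fg gL) xstar_min.
have := mu_condition_gap (h := fbar) psi_mu sub_x' sub_xstar f_gap; rewrite /fbar => gap.
have step : x - x' = eta *: \sum_(j < n) a j + (n%:R * eta) *: u.
  rewrite /u scalerA mulfV ?mulf_neq0 ?gt_eqF // scale1r shuffle_passE //.
  have -> : \sum_(j < n | (j < n)%N) g (sig j) (shuffle_pass g sig eta x j)
          = \sum_(j < n) a j by apply: eq_bigl => j; rewrite ltn_ord.
  by apply/matrixP => i k; rewrite !mxE; ring.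
have expand : sqnorm (x - xstar)
    = sqnorm (x - x') + 2 * eta * \sum_(j < n) dotp (a j) (x' - xstar)
      + 2 * (n%:R * eta) * dotp u (x' - xstar) + sqnorm (x' - xstar).
  have -> : x - xstar = (x - x') + (x' - xstar) by rewrite addrA subrK.
  by rewrite sqnormD {2}step dotpDl !dotpZl dotp_suml; ring.
have gap_n : n%:R * ((mu_f / 2 + mu_psi) * sqnorm (x' - xstar))
    <= n%:R * dotp u (x' - xstar) + \sum_(i < n) f i x' - \sum_(i < n) f i xstar.
  have nK y : n%:R * (n%:R^-1 * \sum_(i < n) f i y) = \sum_(i < n) f i y.
    by rewrite mulrA mulfV ?gt_eqF ?mul1r.
  have := ler_wpM2l (ltW n0) gap; have := nK x'; have := nK xstar.
  rewrite !mulrDr; lra.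
have eta2 : 0 <= 2 * eta by rewrite mulr_ge0 ?ltW.
have := ler_wpM2l eta2 gap_n; have := ler_wpM2l eta2 sum_grad_three_point.
have := smoothness_error_le eta_le.
have : 0 <= n%:R * eta ^+ 3 * shuffling_variance g L sig xstar.
  have V0 := shuffling_variance_ge0 g sig xstar (fun i => ltW (L_gt0 i)).
  by rewrite mulr_ge0 // mulr_ge0 // exprn_ge0 // ltW.
rewrite expand !mulrDr; lra.
Qed.

End Epoch.

Lemma unroll_contraction (R : realFieldType) (K : nat) (e q c : nat -> R) :
  (forall k, (1 <= k <= K)%N -> 0 < q k) ->
  (forall k, (1 <= k <= K)%N -> q k * e k.+1 <= e k + c k) ->
  forall k, (1 <= k <= K)%N ->
    e k.+1 <= e 1%N / (\prod_(1 <= s < k.+1) q s)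
              + \sum_(1 <= l < k.+1) (c l / (\prod_(l <= s < k.+1) q s)).
Proof.
move=> q_gt0 contr; elim => [|k IH] // /andP[k_ge1 k_lt_K].
have k1_range : (1 <= k.+1 <= K)%N by rewrite k_ge1 k_lt_K.
have qk := q_gt0 _ k1_range; have := contr _ k1_range.
have [k0|k_gt0] := posnP k.
  by rewrite k0 in qk *; rewrite !big_nat1 -mulrDl ler_pdivlMr // mulrC.
have IHk := IH (introT andP (conj k_gt0 (ltnW k_lt_K))).
rewrite big_nat_recr //= [\sum_(1 <= l < k.+2) _]big_nat_recr //= big_nat1.
have -> : \sum_(1 <= l < k.+1) (c l / \prod_(l <= s < k.+2) q s)
        = (\sum_(1 <= l < k.+1) (c l / \prod_(l <= s < k.+1) q s)) / q k.+1.
  rewrite mulr_suml; apply: eq_big_nat => l /andP[l_ge1 l_le_k].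
  by rewrite big_nat_recr 1?ltnW //= invfM mulrA.
rewrite invfM mulrA -!mulrDl ler_pdivlMr // mulrC => contr_k.
apply: le_trans contr_k _; lra.
Qed.

Theorem mainTheorem10 (R : realType) (n d : nat) (hn : (0 < n)%N)
  (f : 'I_n -> 'rV[R]_d -> R) (g : 'I_n -> 'rV[R]_d -> 'rV[R]_d)
  (psi : 'rV[R]_d -> \bar R)
  (L : 'I_n -> R) (mu_f mu_psi : R)
  (xstar : 'rV[R]_d) (K : nat) (eta : nat -> R) (sigma : nat -> 'S_n)
  (x : nat -> 'rV[R]_d)
  (hfconv : forall i, convex_fun (f i))
  (hgrad : forall i, is_gradient (f i) (g i))
  (hL : forall i, 0 < L i)
  (hsmooth : forall i, lipschitz_grad (g i) (L i))
  (hmuf : 0 <= mu_f)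
  (hBf : forall y z : 'rV[R]_d,
     mu_f / 2 * sqnorm (y - z) <=
       n%:R^-1 * (\sum_(i < n) f i y) - n%:R^-1 * (\sum_(i < n) f i z)
       - dotp (n%:R^-1 *: \sum_(i < n) g i z) (y - z))
  (hpsi_proper : proper_fun psi) (hpsi_closed : closed_fun psi)
  (hpsi_conv : convex_efun psi)
  (hmupsi : mu_condition psi mu_psi)
  (hxstar_fin : ((n%:R^-1 * \sum_(i < n) f i xstar)%:E + psi xstar)%E
                  \is a fin_num)
  (hxstar_min : forall y : 'rV[R]_d,
     ((n%:R^-1 * \sum_(i < n) f i xstar)%:E + psi xstar
       <= (n%:R^-1 * \sum_(i < n) f i y)%:E + psi y)%E)
  (hK : (2 <= K)%N)
  (heta_pos : forall k, (1 <= k <= K)%N -> 0 < eta k)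
  (heta_le : forall k, (1 <= k <= K)%N ->
     eta k <= (2 * n%:R * Num.sqrt ((n%:R^-1 * \sum_(i < n) L i)
                                     * \big[Num.max/0]_(i < n) L i))^-1)
  (hx1 : (psi (x 1%N) < +oo)%E)
  (hx : forall k, (1 <= k <= K)%N ->
     is_prox_point n psi (eta k)
       (shuffle_pass g (sigma k) (eta k) (x k) n) (x k.+1)) :
  forall k, (1 <= k <= K)%N ->
    sqnorm (x k.+1 - xstar) <=
      sqnorm (xstar - x 1%N)
        / (\prod_(1 <= s < k.+1) (1 + n%:R * eta s * (mu_f + 2 * mu_psi)))
      + \sum_(1 <= l < k.+1)
          (8 * n%:R * eta l ^+ 3
            * (\sum_(i < n | (0 < i)%N)
                 (L (sigma l i) / n%:R
                  * sqnorm (\sum_(j < n | (j < i)%N) g (sigma l j) xstar)))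
           / (\prod_(l <= s < k.+1) (1 + n%:R * eta s * (mu_f + 2 * mu_psi)))).
Proof.
have psi_xstar : psi xstar \is a fin_num by move: hxstar_fin; rewrite fin_numD => /andP[].
have rate_gt0 s : (1 <= s <= K)%N -> 0 < 1 + n%:R * eta s * (mu_f + 2 * mu_psi).
  move=> s_range; have eta_s := heta_pos s s_range.
  have mu_ge0 : 0 <= mu_f + 2 * mu_psi by rewrite addr_ge0 // mulr_ge0 // hmupsi.1.
  by rewrite ltr_pwDl // mulr_ge0 // mulr_ge0 // ltW.
have epoch s : (1 <= s <= K)%N ->
    (1 + n%:R * eta s * (mu_f + 2 * mu_psi)) * sqnorm (x s.+1 - xstar)
    <= sqnorm (x s - xstar)
       + 8 * n%:R * eta s ^+ 3 * shuffling_variance g L (sigma s) xstar.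
  move=> s_range; exact: (epoch_contraction hn hfconv hgrad hL hsmooth (heta_pos s s_range)
    hpsi_proper hpsi_conv hmupsi (hBf _ _) psi_xstar hxstar_min (heta_le s s_range) (hx s s_range)).
move=> k k_range; rewrite (sqnormBC xstar).
exact: (unroll_contraction rate_gt0 epoch k_range).
Qed.
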